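(* Let $G$ be a finite group and $\varphi\colon T\to S$ a morphism of $G$-Tambara functors. Then the map \[ \widetilde\varphi\colon \mathrm{RadId}_G(T)\to\mathrm{RadId}_G(S),\qquad I\mapsto\sqrt{\varphi_*(I)}, \] is a frame homomorphism (it preserves arbitrary joins, finite meets and the top element).
   Context: All rings are commutative with unit. A $G$-Tambara functor $T$ consists of commutative rings $T(G/H)$ for subgroups $H\le G$ with restriction ring maps, additive transfer maps, multiplicative norm maps and conjugation isomorphisms satisfying the standard Tambara axioms (Hill–Mazur). A morphism $\varphi\colon T\to S$ is a family of ring homomorphisms $\varphi_H$ commuting with all structure maps. A Tambara ideal is a family of ring ideals closed under restriction, transfer, norm and conjugation. For a Tambara ideal $I$ of $T$, $\varphi_*(I)$ is the Tambara ideal of $S$ generated by the subsets $\varphi_H(I(G/H))$. Products of Tambara ideals are generated by levelwise products; $\langle x\rangle$ is the Tambara ideal generated by $x$. The radical $\sqrt I$ has $\sqrt I(G/H)=\{x\mid\langle x\rangle^n\subseteq I\text{ for some }n\ge1\}$; $I$ is radical if $I=\sqrt I$. $\mathrm{RadId}_G(T)$ is the set of radical Tambara ideals ordered by inclusion, a frame with meets intersections and joins $\bigvee_\lambda I_\lambda=\sqrt{\sum_\lambda I_\lambda}$ (levelwise sum). *)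

(* G-Tambara functors in the restriction/transfer/norm/
   conjugation presentation of Hill--Mazur, for the finite group
   G = [set: gT] of a finGroupType gT.  Conjugation follows mathcomp's right
   action convention: H :^ g = g^-1 H g, and cj g : T(H) -> T(H :^ g).    *)
From HB Require Import structures.
From mathcomp Require Import all_boot all_order all_algebra all_fingroup.
From Stdlib Require List.
Set Implicit Arguments.
Unset Strict Implicit.
Unset Printing Implicit Defensive.
Import GRing.Theory.
Local Open Scope ring_scope.

Definition pick_in (X : finType) (A : {set X}) (d : X) : X :=
  odflt d [pick x in A].

(* raw data: levels, restriction, transfer, norm, conjugation.
   tres H K : T(K) -> T(H), ttr H K, tnm H K : T(H) -> T(K) (meaningful for
   H \subset K); tcj g H K : T(H) -> T(K) (meaningful for K = H :^ g). *)
Record tdata (gT : finGroupType) := TData {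
  tT  : {group gT} -> comPzRingType;
  tres : forall H K : {group gT}, tT K -> tT H;
  ttr  : forall H K : {group gT}, tT H -> tT K;
  tnm  : forall H K : {group gT}, tT H -> tT K;
  tcj  : gT -> forall H K : {group gT}, tT H -> tT K }.

Arguments tT {gT} t H.
Arguments tres {gT} t H K.
Arguments ttr {gT} t H K.
Arguments tnm {gT} t H K.
Arguments tcj {gT} t g H K.

Section Tambara.
Variable gT : finGroupType.
Implicit Types (H K L : {group gT}) (g x : gT).

Definition dcosets (H L K : {set gT}) : {set {set gT}} :=
  [set [set (h * x * l)%g | h in H, l in L] | x in K].

Variable D : tdata gT.
Local Notation T := (tT D).
Local Notation res := (tres D).
Local Notation tr := (ttr D).
Local Notation nm := (tnm D).
Local Notation cj := (tcj D).

Definition ring_hom (R S : comPzRingType) (f : R -> S) : Prop :=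
  [/\ forall a b, f (a + b) = f a + f b,
      forall a b, f (a * b) = f a * f b & f 1 = 1].

Definition conj_axioms : Prop :=
  [/\ forall g H K, (K :=: H :^ g)%g -> ring_hom (cj g H K),
      forall H h (a : T H), h \in H -> cj h H H a = a &
      forall g h H K L (a : T H), (K :=: H :^ g)%g -> (L :=: K :^ h)%g ->
        cj h K L (cj g H K a) = cj (g * h)%g H L a].

Definition rtn_axioms : Prop :=
  [/\ [/\ forall H (a : T H), res H H a = a,
          forall H (a : T H), tr H H a = a,
          forall H (a : T H), nm H H a = a,
          forall H K, (H \subset K)%g -> ring_hom (res H K) &
          forall H K, (H \subset K)%g ->
            (forall a b, tr H K (a + b) = tr H K a + tr H K b) /\
            (forall a b, nm H K (a * b) = nm H K a * nm H K b) /\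
            nm H K 1 = 1],
      forall H K L (a : T L), (H \subset K)%g -> (K \subset L)%g ->
        res H K (res K L a) = res H L a,
      forall H K L (a : T H), (H \subset K)%g -> (K \subset L)%g ->
        tr K L (tr H K a) = tr H L a &
      forall H K L (a : T H), (H \subset K)%g -> (K \subset L)%g ->
        nm K L (nm H K a) = nm H L a].

Definition conj_compat_axioms : Prop :=
  forall g H K H' K', (H \subset K)%g -> (H' :=: H :^ g)%g -> (K' :=: K :^ g)%g ->
  [/\ forall a : T K, cj g H H' (res H K a) = res H' K' (cj g K K' a),
      forall a : T H, cj g K K' (tr H K a) = tr H' K' (cj g H H' a) &
      forall a : T H, cj g K K' (nm H K a) = nm H' K' (cj g H H' a)].

Definition frobenius_axiom : Prop :=
  forall H K (a : T H) (b : T K), (H \subset K)%g ->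
    tr H K a * b = tr H K (a * res H K b).

Definition mackey_axioms : Prop :=
  forall H L K (a : T H), (H \subset K)%g -> (L \subset K)%g ->
  res L K (tr H K a) =
    \sum_(C in dcosets H L K)
       tr (L :&: H :^ pick_in C 1%g)%G L
          (res (L :&: H :^ pick_in C 1%g)%G (H :^ pick_in C 1%g)%G
               (cj (pick_in C 1%g) H (H :^ pick_in C 1%g)%G a))
  /\
  res L K (nm H K a) =
    \prod_(C in dcosets H L K)
       nm (L :&: H :^ pick_in C 1%g)%G L
          (res (L :&: H :^ pick_in C 1%g)%G (H :^ pick_in C 1%g)%G
               (cj (pick_in C 1%g) H (H :^ pick_in C 1%g)%G a)).

(* stabiliser in K of a set S of cosets, for the right translation action *)
Definition stabS (K : {group gT}) (S : {set {set gT}}) : {group gT} :=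
  ('C_K[S | ('Rs)^*])%G.

Definition orbitsS (K : {group gT}) (X : {set {set {set gT}}}) :=
  [set orbit ('Rs)^* K S | S in X].

Definition orbitsC (KS H K : {group gT}) : {set {set {set gT}}} :=
  [set orbit 'Rs KS C | C in rcosets H K].

(* one factor of the exponential formula: the orbit O of the coset
   C = H x (x := representative), norm from KS :&: H^x to KS of the
   restriction of cj x a. *)
Definition nfactor (KS H : {group gT}) (O : {set {set gT}}) (a : T H) : T KS :=
  let x := pick_in (pick_in O (H : {set gT})) 1%g in
  nm (KS :&: H :^ x)%G KS
     (res (KS :&: H :^ x)%G (H :^ x)%G (cj x H (H :^ x)%G a)).

Definition norm_sum_axiom : Prop :=
  forall H K (a b : T H), (H \subset K)%g ->
  nm H K (a + b) =
    \sum_(OS in orbitsS K (powerset (rcosets H K)))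
      let S := pick_in OS set0 in
      tr (stabS K S) K
        (\prod_(O in orbitsC (stabS K S) H K)
           nfactor (stabS K S) O
             (if pick_in O (H : {set gT}) \in S then b else a)).

(* sections of the projection L\K -> H\K, as sets of L-cosets *)
Definition sections (L H K : {set gT}) : {set {set {set gT}}} :=
  [set S in powerset (rcosets L K) |
     [forall C in rcosets H K, #|[set E in S | E \subset C]| == 1%N]].

Definition norm_tr_axiom : Prop :=
  forall L H K (a : T L), (L \subset H)%g -> (H \subset K)%g ->
  nm H K (tr L H a) =
    \sum_(OS in orbitsS K (sections L H K))
      let S := pick_in OS set0 in
      let KS := stabS K S in
      tr KS K
        (\prod_(O in orbitsC KS H K)
           let C := pick_in O (H : {set gT}) in
           let x := pick_in C 1%g in
           let y := pick_in (pick_in [set E in S | E \subset C]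
                                     (L : {set gT})) 1%g in
           nm (KS :&: H :^ x)%G KS
              (res (KS :&: H :^ x)%G (L :^ y)%G (cj y L (L :^ y)%G a))).

Definition tambara_axioms : Prop :=
  [/\ conj_axioms, rtn_axioms, conj_compat_axioms, frobenius_axiom &
      [/\ mackey_axioms, norm_sum_axiom & norm_tr_axiom]].

End Tambara.


Record tambara (gT : finGroupType) := Tambara {
  tdata_of :> tdata gT;
  tambara_ax : tambara_axioms tdata_of }.

Section Ideals.
Variable gT : finGroupType.
Implicit Types (H K : {group gT}) (g : gT).

Definition tfam (T : tdata gT) := forall H : {group gT}, tT T H -> Prop.

Definition fsub (T : tdata gT) (I J : tfam T) : Prop :=
  forall H x, I H x -> J H x.
Definition feq (T : tdata gT) (I J : tfam T) : Prop :=
  forall H x, I H x <-> J H x.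

Definition is_tideal (T : tdata gT) (I : tfam T) : Prop :=
  [/\ forall H, I H 0,
      forall H x y, I H x -> I H y -> I H (x + y),
      forall H (r x : tT T H), I H x -> I H (r * x),
      forall H K x, (H \subset K)%g -> I K x -> I H (tres T H K x) &
  [/\ forall H K x, (H \subset K)%g -> I H x -> I K (ttr T H K x),
      forall H K x, (H \subset K)%g -> I H x -> I K (tnm T H K x) &
      forall g H K x, (K :=: H :^ g)%g -> I H x -> I K (tcj T g H K x)]].

Definition tgen (T : tdata gT) (A : tfam T) : tfam T :=
  fun H x => forall J : tfam T, is_tideal J -> fsub A J -> J H x.

Definition tgen1 (T : tdata gT) (H : {group gT}) (x : tT T H) : tfam T :=
  tgen (fun (K : {group gT}) (y : tT T K) => exists e : H = K, y = ecast Z (tT T Z) e x).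

Definition tmul (T : tdata gT) (I J : tfam T) : tfam T :=
  tgen (fun H z => exists x y, [/\ I H x, J H y & z = x * y]).

(* powers I^(n+1) *)
Fixpoint tpow (T : tdata gT) (I : tfam T) (n : nat) : tfam T :=
  if n is m.+1 then tmul (tpow I m) I else I.

Definition trad (T : tdata gT) (I : tfam T) : tfam T :=
  fun H x => exists n : nat, fsub (tpow (tgen1 x) n) I.

Definition is_radical_tideal (T : tdata gT) (I : tfam T) : Prop :=
  is_tideal I /\ feq I (trad I).

Definition tsum (T : tdata gT) (Lam : Type) (F : Lam -> tfam T) : tfam T :=
  fun H z => exists s : seq (Lam * tT T H),
    (forall p, List.In p s -> F p.1 H p.2) /\ z = \sum_(p <- s) p.2.

Definition tjoin (T : tdata gT) (Lam : Type) (F : Lam -> tfam T) : tfam T :=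
  trad (tsum F).

Definition tmeet (T : tdata gT) (I J : tfam T) : tfam T :=
  fun H x => I H x /\ J H x.

Definition ttop (T : tdata gT) : tfam T := fun _ _ => True.

Definition is_tmorph (T S : tdata gT) (f : forall H, tT T H -> tT S H) : Prop :=
  [/\ forall H, ring_hom (f H),
      forall H K x, (H \subset K)%g -> f H (tres T H K x) = tres S H K (f K x),
      forall H K x, (H \subset K)%g -> f K (ttr T H K x) = ttr S H K (f H x),
      forall H K x, (H \subset K)%g -> f K (tnm T H K x) = tnm S H K (f H x) &
      forall g H K x, (K :=: H :^ g)%g -> f K (tcj T g H K x) = tcj S g H K (f H x)].

Definition tpush (T S : tdata gT) (f : forall H, tT T H -> tT S H) (I : tfam T)
  : tfam S := tgen (fun H y => exists x, I H x /\ y = f H x).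

Definition tphi (T S : tdata gT) (f : forall H, tT T H -> tT S H) (I : tfam T)
  : tfam S := trad (tpush f I).

End Ideals.
Arguments ttop {gT} T _ _.

(* Everything rests on an explicit description of generated ideals.  If a family [M]
   is closed under restriction, conjugation and norm, the Tambara ideal it generates
   consists of the finite sums of transfers [tr (r * m)] with [m] in [M]; closure under
   norms comes from the Tambara reciprocity formulas by induction on the order of the
   group (the same induction gives [nm 0 = 0]).  Products of at least [n+1] atoms
   [N_B^K R_B c_g (x)] form such a family, and every element of [<x>^(n+1)] is a sum of
   transfers of them.  Each statement about radicals thus becomes a count of atoms:
   [sqrt I] is an ideal because a product of [a+b+2] atoms of [x] and [y] contains [a+1]
   atoms of [x] or [b+1] atoms of [y]; [sqrt (sqrt I) = sqrt I] because in a long product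
   some atom repeats [k(m+1)] times and the [k]-th power of an atom of [x] is an atom of
   [x^k]; [sqrt (phi_* -)] preserves meets by cutting a product of atoms in two, and
   joins because [phi] maps atoms of [x] to atoms of [phi x].  The top is preserved as
   [phi 1 = 1]. *)

From mathcomp Require Import all_boot all_order all_algebra all_fingroup.
From mathcomp Require Import zify.
From Stdlib Require List.

Set Implicit Arguments.
Unset Strict Implicit.
Unset Printing Implicit Defensive.

Import GRing.Theory.
Local Open Scope ring_scope.

Lemma prodr_const_idem (R : comPzRingType) (I : finType) (A : {pred I}) (c : R) :
  c * c = c -> (0 < #|A|)%N -> \prod_(i in A) c = c.
Proof.
move=> cc; rewrite prodr_const; case: #|A| => // m _.
by elim: m => [|m IHm]; rewrite ?expr1 // exprS IHm.
Qed.

Lemma size_count_mem_sum (A : finType) (s : seq A) : size s = (\sum_(a : A) count_mem a s)%N.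
Proof.
elim: s => [|x s IHs]; first by rewrite big1.
rewrite /= IHs big_split /= -add1n; congr (_ + _)%N.
by rewrite (bigD1 x) //= eqxx big1 // => a /negbTE; rewrite eq_sym => ->.
Qed.

Lemma count_mem_pigeonhole (A : finType) (s : seq A) c :
  (#|A| * c < size s)%N -> exists a, (c < count_mem a s)%N.
Proof.
move=> lts; have /forallPn[a] : ~~ [forall a, count_mem a s <= c]%N.
  apply/forallP => le_c; move: lts; rewrite size_count_mem_sum -sum_nat_const ltnNge.
  by rewrite leq_sum.
by rewrite -ltnNge; exists a.
Qed.

Lemma prod_count_mem (R : comPzRingType) (A : eqType) (s : seq A) (F : A -> R) a :
  \prod_(t <- s) F t = F a ^+ count_mem a s * \prod_(t <- s | t != a) F t.
Proof.
elim: s => [|t s IHs]; first by rewrite !big_nil mulr1.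
rewrite !big_cons IHs /=; case: eqP => [->|_] /=; first by rewrite add1n exprS mulrA.
by rewrite add0n mulrCA.
Qed.

Lemma conj_subG (gT : finGroupType) (H K : {group gT}) x :
  H \subset K -> x \in K -> (H :^ x \subset K)%g.
Proof. by move=> sHK xK; rewrite -(conjGid xK) conjSg. Qed.

Lemma setI_conjG (gT : finGroupType) (H K : {group gT}) x :
  H \subset K -> x \in K -> (K :&: H :^ x)%g = (H :^ x)%g.
Proof. by move=> sHK xK; apply/setIidPr/conj_subG. Qed.

Lemma mem_pick_in (X : finType) (A : {set X}) a d : a \in A -> pick_in A d \in A.
Proof. by rewrite /pick_in; case: pickP => [b -> // | /(_ a) ->]. Qed.

Lemma pick_in1 (X : finType) (a d : X) : pick_in [set a] d = a.
Proof. exact/set1P/(mem_pick_in _ (set11 a)). Qed.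

Section RingHom.
Variables (R S : comPzRingType) (f : R -> S).

Lemma additive_map0 : {morph f : a b / a + b} -> f 0 = 0.
Proof. by move=> fD; apply: (addrI (f 0)); rewrite -fD !addr0. Qed.

Hypothesis hf : ring_hom f.

Lemma ring_homD : {morph f : a b / a + b}. Proof. by case: hf. Qed.
Lemma ring_homM : {morph f : a b / a * b}. Proof. by case: hf. Qed.
Lemma ring_hom1 : f 1 = 1. Proof. by case: hf. Qed.
Lemma ring_hom0 : f 0 = 0. Proof. exact: additive_map0 ring_homD. Qed.

Lemma ring_homX a n : f (a ^+ n) = f a ^+ n.
Proof. by elim: n => [|n IHn]; rewrite ?ring_hom1 // !exprS ring_homM IHn. Qed.

Lemma ring_hom_prod I (r : seq I) (P : pred I) (F : I -> R) :
  f (\prod_(i <- r | P i) F i) = \prod_(i <- r | P i) f (F i).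
Proof. exact: (big_morph f ring_homM ring_hom1). Qed.

End RingHom.

Section IdealTheory.
Variables (gT : finGroupType) (D : tdata gT).
Implicit Types (A B I J : tfam D) (H K : {group gT}).

Lemma fsub_refl A : fsub A A.
Proof. by []. Qed.

Lemma fsub_trans A B (C : tfam D) : fsub A B -> fsub B C -> fsub A C.
Proof. by move=> sAB sBC H x /sAB /sBC. Qed.

Lemma tideal0 I : is_tideal I -> forall H, I H 0.
Proof. by case. Qed.
Lemma tidealD I H x y : is_tideal I -> I H x -> I H y -> I H (x + y).
Proof. by case=> _ h *; apply: h. Qed.
Lemma tidealMl I H x : is_tideal I -> I H x -> forall r, I H (r * x).
Proof. by case=> _ _ h *; apply: h. Qed.
Lemma tidealMr I H x : is_tideal I -> I H x -> forall r, I H (x * r).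
Proof. by move=> hI Ix r; rewrite mulrC; apply: tidealMl. Qed.
Lemma tideal_res I H K x : is_tideal I -> H \subset K -> I K x -> I H (tres D H K x).
Proof. by case=> _ _ _ h *; apply: h. Qed.
Lemma tideal_tr I H K x : is_tideal I -> H \subset K -> I H x -> I K (ttr D H K x).
Proof. by case=> _ _ _ _ [h *]; apply: h. Qed.
Lemma tideal_nm I H K x : is_tideal I -> H \subset K -> I H x -> I K (tnm D H K x).
Proof. by case=> _ _ _ _ [_ h *]; apply: h. Qed.
Lemma tideal_cj I g H K x : is_tideal I -> (K :=: H :^ g)%g -> I H x -> I K (tcj D g H K x).
Proof. by case=> _ _ _ _ [_ _ h *]; apply: h. Qed.
Lemma tideal_trM I H K x : is_tideal I -> H \subset K -> I H x ->
  forall r, I K (ttr D H K (r * x)).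
Proof. by move=> hI sHK Ix r; apply: (tideal_tr hI sHK); apply: tidealMl. Qed.

Lemma tgen_tideal A : is_tideal (tgen A).
Proof.
split=> [H J hJ _|H x y hx hy J hJ sAJ|H r x hx J hJ sAJ|H K x sHK hx J hJ sAJ|].
- exact: tideal0.
- by apply: tidealD => //; [apply: hx | apply: hy].
- by apply: tidealMl => //; apply: hx.
- by apply: tideal_res => //; apply: hx.
split=> [H K x sHK hx J hJ sAJ|H K x sHK hx J hJ sAJ|g H K x eK hx J hJ sAJ].
- by apply: tideal_tr => //; apply: hx.
- by apply: tideal_nm => //; apply: hx.
- by apply: tideal_cj => //; apply: hx.
Qed.

Lemma tmeet_tideal I J : is_tideal I -> is_tideal J -> is_tideal (tmeet I J).
Proof.
move=> hI hJ; split=> [H|H x y [Ix Jx] [Iy Jy]|H r x [Ix Jx]|H K x sHK [Ix Jx]|].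
- by split; apply: tideal0.
- by split; [apply: (tidealD hI) | apply: (tidealD hJ)].
- by split; [apply: (tidealMl hI) | apply: (tidealMl hJ)].
- by split; [apply: (tideal_res hI) | apply: (tideal_res hJ)].
split=> [H K x sHK [Ix Jx]|H K x sHK [Ix Jx]|g H K x eK [Ix Jx]].
- by split; [apply: (tideal_tr hI) | apply: (tideal_tr hJ)].
- by split; [apply: (tideal_nm hI) | apply: (tideal_nm hJ)].
- by split; [apply: (tideal_cj hI) | apply: (tideal_cj hJ)].
Qed.

Lemma tgen_sub A : fsub A (tgen A).
Proof. by move=> H x Ax J _ sAJ; apply: sAJ. Qed.

Lemma tgen_min A J : is_tideal J -> fsub A J -> fsub (tgen A) J.
Proof. by move=> hJ sAJ H x; apply. Qed.

Lemma tgen_mono A B : fsub A B -> fsub (tgen A) (tgen B).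
Proof.
by move=> sAB; apply: tgen_min (tgen_tideal B) (fsub_trans sAB (@tgen_sub B)).
Qed.

Lemma tgen1_mem H (x : tT D H) : tgen1 x x.
Proof. by apply: tgen_sub; exists erefl. Qed.

Lemma tgen1_min J H (x : tT D H) : is_tideal J -> J H x -> fsub (tgen1 x) J.
Proof. by move=> hJ Jx; apply: tgen_min => // K _ [e ->]; case: K / e. Qed.

Lemma tgen1_sub H (x : tT D H) K (y : tT D K) :
  tgen1 x y -> fsub (tgen1 y) (tgen1 x).
Proof. exact: tgen1_min (tgen_tideal _). Qed.

Lemma tmul_mem I J H x y : I H x -> J H y -> tmul I J (x * y).
Proof. by move=> Ix Jy; apply: tgen_sub; exists x, y. Qed.

Lemma tmul_mono I I' J J' : fsub I I' -> fsub J J' -> fsub (tmul I J) (tmul I' J').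
Proof.
move=> sII' sJJ'; apply: tgen_min; first exact: tgen_tideal.
by move=> H z [x [y [Ix Jy ->]]]; apply: tmul_mem; [apply: sII' | apply: sJJ'].
Qed.

Lemma tpow_tideal I n : is_tideal I -> is_tideal (tpow I n).
Proof. by case: n => [|n] // _; apply: tgen_tideal. Qed.

Lemma tpow_mono I J n : fsub I J -> fsub (tpow I n) (tpow J n).
Proof. by move=> sIJ; elim: n => [|n IHn] //=; apply: tmul_mono. Qed.

(* [tpow I n] is [I^(n+1)], hence the bound [n < size s]. *)
Lemma tpow_prod I H (s : seq (tT D H)) n : is_tideal I ->
  (forall z, z \in s -> I H z) -> (n < size s)%N -> tpow I n (\prod_(z <- s) z).
Proof.
move=> hI; elim: n s => [|n IHn] [|a s] //= Is ltns.
  by rewrite big_cons; apply: tidealMr => //; apply: Is; rewrite mem_head.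
rewrite big_cons mulrC; apply: tmul_mem; last by apply: Is; rewrite mem_head.
by apply: IHn => // z zs; apply: Is; rewrite inE zs orbT.
Qed.

Lemma tpow_expr I H (a : tT D H) n : I H a -> tpow I n (a ^+ n.+1).
Proof.
move=> Ia; elim: n => [|n IHn] /=; first by rewrite expr1.
by rewrite exprSr; apply: tmul_mem.
Qed.

Lemma trad_mono A B : fsub A B -> fsub (trad A) (trad B).
Proof. by move=> sAB H x [n sA]; exists n; apply: fsub_trans sAB. Qed.

Lemma tideal_sub_trad I A : is_tideal I -> fsub I A -> fsub I (trad A).
Proof. by move=> hI sIA H x Ix; exists 0%N; apply: fsub_trans sIA; apply: tgen1_min. Qed.

Lemma trad_tgen1 A H K (x : tT D H) (y : tT D K) :
  tgen1 x y -> trad A x -> trad A y.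
Proof. by move=> xy [n sA]; exists n; apply: fsub_trans (tpow_mono (tgen1_sub xy)) sA. Qed.

End IdealTheory.

Arguments fsub_refl {gT D} A.
Arguments tgen1_mem {gT D H} x.

Section TambaraAxioms.
Variables (gT : finGroupType) (T : tambara gT).
Implicit Types (H K L : {group gT}) (g : gT).
Local Notation res := (tres T).
Local Notation tr := (ttr T).
Local Notation nm := (tnm T).
Local Notation cj := (tcj T).

Lemma res_id H a : res H H a = a.
Proof. by case: (tambara_ax T) => _ [[h *] *]; apply: h. Qed.
Lemma tr_id H a : tr H H a = a.
Proof. by case: (tambara_ax T) => _ [[_ h *] *]; apply: h. Qed.
Lemma nm_id H a : nm H H a = a.
Proof. by case: (tambara_ax T) => _ [[_ _ h *] *]; apply: h. Qed.
Lemma res_ring_hom H K : H \subset K -> ring_hom (res H K).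
Proof. by case: (tambara_ax T) => _ [[_ _ _ h *] *]; apply: h. Qed.
Lemma trD H K : H \subset K -> {morph tr H K : a b / a + b}.
Proof. by case: (tambara_ax T) => _ [[_ _ _ _ h] _ _ _] _ _ _ /h [hD _]; exact: hD. Qed.
Lemma nmM H K : H \subset K -> {morph nm H K : a b / a * b}.
Proof. by case: (tambara_ax T) => _ [[_ _ _ _ h] _ _ _] _ _ _ /h [_ [hM _]]; exact: hM. Qed.
Lemma nm1 H K : H \subset K -> nm H K 1 = 1.
Proof. by case: (tambara_ax T) => _ [[_ _ _ _ h] _ _ _] _ _ _ /h [_ [_ ->]]. Qed.
Lemma res_trans H K L a : H \subset K -> K \subset L -> res H K (res K L a) = res H L a.
Proof. by case: (tambara_ax T) => _ [_ h *]; apply: h. Qed.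
Lemma tr_trans H K L a : H \subset K -> K \subset L -> tr K L (tr H K a) = tr H L a.
Proof. by case: (tambara_ax T) => _ [_ _ h *]; apply: h. Qed.
Lemma nm_trans H K L a : H \subset K -> K \subset L -> nm K L (nm H K a) = nm H L a.
Proof. by case: (tambara_ax T) => _ [_ _ _ h] *; apply: h. Qed.
Lemma cj_ring_hom g H K : (K :=: H :^ g)%g -> ring_hom (cj g H K).
Proof. by case: (tambara_ax T) => [[h *] *]; apply: h. Qed.
Lemma cj_in h H a : h \in H -> cj h H H a = a.
Proof. by case: (tambara_ax T) => [[_ hh *] *]; apply: hh. Qed.
Lemma cj_comp g h H K L a : (K :=: H :^ g)%g -> (L :=: K :^ h)%g ->
  cj h K L (cj g H K a) = cj (g * h)%g H L a.
Proof. by case: (tambara_ax T) => [[_ _ hh] *]; apply: hh. Qed.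
Lemma cj_res g H K H' K' a : H \subset K -> (H' :=: H :^ g)%g -> (K' :=: K :^ g)%g ->
  cj g H H' (res H K a) = res H' K' (cj g K K' a).
Proof. by case: (tambara_ax T) => _ _ h _ _ sHK eH eK; case: (h g H K H' K'). Qed.
Lemma cj_tr g H K H' K' a : H \subset K -> (H' :=: H :^ g)%g -> (K' :=: K :^ g)%g ->
  cj g K K' (tr H K a) = tr H' K' (cj g H H' a).
Proof. by case: (tambara_ax T) => _ _ h _ _ sHK eH eK; case: (h g H K H' K'). Qed.
Lemma cj_nm g H K H' K' a : H \subset K -> (H' :=: H :^ g)%g -> (K' :=: K :^ g)%g ->
  cj g K K' (nm H K a) = nm H' K' (cj g H H' a).
Proof. by case: (tambara_ax T) => _ _ h _ _ sHK eH eK; case: (h g H K H' K'). Qed.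
Lemma frobenius H K a b : H \subset K -> tr H K a * b = tr H K (a * res H K b).
Proof. by case: (tambara_ax T) => _ _ _ h *; apply: h. Qed.
Lemma mackey_tr H L K a : H \subset K -> L \subset K ->
  res L K (tr H K a) =
    \sum_(C in dcosets H L K)
       tr (L :&: H :^ pick_in C 1%g)%G L
          (res (L :&: H :^ pick_in C 1%g)%G (H :^ pick_in C 1%g)%G
               (cj (pick_in C 1%g) H (H :^ pick_in C 1%g)%G a)).
Proof. by case: (tambara_ax T) => _ _ _ _ [h _ _] sHK sLK; case: (h H L K a). Qed.
Lemma mackey_nm H L K a : H \subset K -> L \subset K ->
  res L K (nm H K a) =
    \prod_(C in dcosets H L K)
       nm (L :&: H :^ pick_in C 1%g)%G L
          (res (L :&: H :^ pick_in C 1%g)%G (H :^ pick_in C 1%g)%G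
               (cj (pick_in C 1%g) H (H :^ pick_in C 1%g)%G a)).
Proof. by case: (tambara_ax T) => _ _ _ _ [h _ _] sHK sLK; case: (h H L K a). Qed.
Lemma nm_sum : norm_sum_axiom T.
Proof. by case: (tambara_ax T) => _ _ _ _ []. Qed.
Lemma nm_tr : norm_tr_axiom T.
Proof. by case: (tambara_ax T) => _ _ _ _ []. Qed.

Lemma tr0 H K : H \subset K -> tr H K 0 = 0.
Proof. by move/trD/additive_map0. Qed.
Lemma nmX H K a n : H \subset K -> nm H K (a ^+ n) = nm H K a ^+ n.
Proof. by move=> sHK; elim: n => [|n IHn]; rewrite ?nm1 // !exprS nmM // IHn. Qed.

End TambaraAxioms.

(** * Orbits of cosets *)

Section Cosets.
Local Open Scope group_scope.
Variable gT : finGroupType.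
Implicit Types (H K L KS : {group gT}) (x y k : gT) (E C : {set gT}).
Implicit Types (S O : {set {set gT}}) (OS : {set {set {set gT}}}).

Lemma rcoset_in_rcosets H K x : x \in K -> H :* x \in rcosets H K.
Proof. by move=> xK; rewrite -rcosetE imset_f. Qed.

Lemma rcosets_mulr H K C k : C \in rcosets H K -> k \in K -> C :* k \in rcosets H K.
Proof.
by case/rcosetsP=> z zK -> kK; rewrite -rcosetM rcoset_in_rcosets ?groupM.
Qed.

Lemma rcosets_act H K k : k \in K -> [set E :* k | E in rcosets H K] = rcosets H K.
Proof.
move=> kK; apply/setP => E; apply/imsetP/idP => [[E' E'K ->]|EK].
  exact: rcosets_mulr.
by exists (E :* k^-1); rewrite ?rcosetKV // rcosets_mulr ?groupV.
Qed.

Lemma setactRs S k : setact 'Rs S k = [set E :* k | E in S].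
Proof. by apply: eq_imset => E; rewrite /= rcosetE. Qed.

Lemma stabSP K S k : reflect (k \in K /\ [set E :* k | E in S] = S) (k \in stabS K S).
Proof. by rewrite -setactRs; apply: (iffP setIP) => -[kK /astab1P]. Qed.

Lemma stabS_sub K S : stabS K S \subset K.
Proof. exact: subsetIl. Qed.

Lemma orbitS_mem K S0 S :
  S \in orbit ('Rs)^* K S0 -> exists2 k, k \in K & S = [set E :* k | E in S0].
Proof. by case/imsetP=> k kK ->; exists k; rewrite //= setactRs. Qed.

Lemma orbitS_fixed K S :
  (forall k, k \in K -> [set E :* k | E in S] = S) -> orbit ('Rs)^* K S = [set S].
Proof.
move=> fixS; apply/setP => S'; rewrite inE.
apply/idP/eqP => [/orbitS_mem[k kK ->] | ->]; [exact: fixS | exact: orbit_refl].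
Qed.

Lemma pick_orbitS K S0 : pick_in (orbit ('Rs)^* K S0) set0 \in orbit ('Rs)^* K S0.
Proof. exact/mem_pick_in/orbit_refl. Qed.

Lemma orbitsC_H KS H K : orbit 'Rs KS (H : {set gT}) \in orbitsC KS H K.
Proof. by apply: imset_f; have := rcoset_in_rcosets H (group1 K); rewrite rcoset1. Qed.

Lemma orbitsC_pick KS H K O : KS \subset K -> H \subset K -> O \in orbitsC KS H K ->
  pick_in (pick_in O (H : {set gT})) 1 \in K /\
  pick_in O (H : {set gT}) = H :* pick_in (pick_in O (H : {set gT})) 1.
Proof.
move=> sKS sHK /imsetP[_ /rcosetsP[y yK ->] ->].
set C := pick_in (orbit _ _ _) _.
have /imsetP[k kKS /=] : C \in orbit 'Rs KS (H :* y) by apply/mem_pick_in/orbit_refl.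
rewrite rcosetE -rcosetM => eC.
have ykK : y * k \in K by rewrite groupM // (subsetP sKS).
have xC : pick_in C 1 \in H :* (y * k).
  by rewrite -eC; apply: (mem_pick_in (a := y * k)); rewrite eC rcoset_refl.
split; last by rewrite {1}eC; apply/esym/rcoset_eqP.
move: xC; rewrite mem_rcoset => /(subsetP sHK) xyK.
by rewrite -(mulgKV (y * k) (pick_in C 1)) groupM.
Qed.

Lemma rcosets_fixed_set H K S : S \subset rcosets H K ->
  (forall k, k \in K -> [set E :* k | E in S] = S) -> S = set0 \/ S = rcosets H K.
Proof.
move=> sSX fixS; have [-> | [E ES]] := set_0Vmem S; [by left | right].
apply/eqP; rewrite eqEsubset sSX; apply/subsetP => _ /rcosetsP[z zK ->].
have /rcosetsP[w wK eE] := subsetP sSX E ES.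
rewrite -(fixS (w^-1 * z)) ?groupM ?groupV //.
by apply/imsetP; exists E; rewrite // eE -rcosetM mulKVg.
Qed.

Lemma orbitsS_fixed H K OS : OS \in orbitsS K (powerset (rcosets H K)) ->
  K \subset stabS K (pick_in OS set0) -> OS = [set set0] \/ OS = [set rcosets H K].
Proof.
case/imsetP=> S0; rewrite powersetE => sS0X -> sK.
set S := pick_in _ set0 in sK *.
have fixS k : k \in K -> [set E :* k | E in S] = S by move/(subsetP sK)/stabSP=> [].
have [k kK eS] := orbitS_mem (pick_orbitS K S0).
have -> : orbit ('Rs)^* K S0 = [set S].
  by rewrite -(orbitS_fixed fixS); apply/esym/orbit_eqP/pick_orbitS.
have sSX : S \subset rcosets H K.
  by rewrite /S eS -(rcosets_act H kK) imsetS.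
by case: (rcosets_fixed_set sSX fixS) => ->; [left | right].
Qed.

Lemma stabS_set0 K : stabS K set0 = K.
Proof.
apply/val_inj/eqP; rewrite eqEsubset stabS_sub /=.
by apply/subsetP => k kK; apply/stabSP; rewrite imset0.
Qed.

Lemma stabS_rcosets H K : stabS K (rcosets H K) = K.
Proof.
apply/val_inj/eqP; rewrite eqEsubset stabS_sub /=.
by apply/subsetP => k kK; apply/stabSP; rewrite rcosets_act.
Qed.

Lemma orbitsS_set0 H K : [set set0] \in orbitsS K (powerset (rcosets H K)).
Proof.
apply/imsetP; exists set0; first by rewrite powersetE sub0set.
by rewrite orbitS_fixed // => k _; rewrite imset0.
Qed.

Lemma orbitsS_rcosets H K : [set rcosets H K] \in orbitsS K (powerset (rcosets H K)).
Proof.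
apply/imsetP; exists (rcosets H K); first by rewrite powersetE.
by rewrite orbitS_fixed // => k; apply: rcosets_act.
Qed.

Lemma set0_neq_rcosets H K : [set set0] != [set rcosets H K] :> {set {set {set gT}}}.
Proof.
apply/negP => /eqP/setP/(_ set0); rewrite !inE eqxx => /esym/eqP e.
by have := rcoset_in_rcosets H (group1 K); rewrite -e inE.
Qed.

Lemma sections_act L H K S k : S \in sections L H K -> k \in K ->
  [set E :* k | E in S] \in sections L H K.
Proof.
rewrite !inE => /andP[sSX /forall_inP secS] kK.
apply/andP; split.
  by rewrite -(rcosets_act L kK) imsetS.
apply/forall_inP => C CX.
have -> : [set E in [set E :* k | E in S] | E \subset C] =
          [set E :* k | E in [set E in S | E \subset C :* k^-1]].
  apply/setP => E'; rewrite inE; apply/andP/imsetP => [[/imsetP[E ES ->] sEC]|[E]].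
    by exists E; rewrite // inE ES sub_rcosetV.
  by rewrite inE => /andP[ES sEC] ->; split; [apply: imset_f | rewrite -sub_rcosetV].
by rewrite card_imset ?secS ?rcosets_mulr ?groupV //; apply: can_inj (rcosetK k).
Qed.

(* The stabiliser of a section [S] fixes the [L]-coset that [S] picks inside [H x]. *)
Lemma stabS_section_sub L H K S x : S \in sections L H K -> x \in K ->
  stabS K S :&: H :^ x \subset L :^ pick_in (pick_in [set E in S | E \subset H :* x] L) 1.
Proof.
rewrite !inE => /andP[sSX /forall_inP/(_ _ (rcoset_in_rcosets H _))] secS xK.
have /cards1P[E0 eE0] := secS x xK; rewrite eE0 pick_in1.
have /setIdP[E0S sE0Hx] : E0 \in [set E in S | E \subset H :* x] by rewrite eE0 set11.
have /rcosetsP[z _ eE0z] := subsetP sSX E0 E0S.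
set y := pick_in E0 1.
have eE0y : E0 = L :* y.
  by rewrite eE0z; apply/esym/rcoset_eqP; rewrite -eE0z (mem_pick_in _ (a := z)) // eE0z rcoset_refl.
apply/subsetP => k /setIP[/stabSP[kK eS] kHx].
have eHxk : H :* x :* k = H :* x.
  by rewrite -rcosetM conjgCV rcosetM [H :* (k ^ _)]rcoset_id // -mem_conjg.
have : E0 :* k \in [set E in S | E \subset H :* x].
  by rewrite inE -{1}eS -eHxk rcosetS sE0Hx andbT; apply: imset_f.
rewrite eE0 => /set1P; rewrite eE0y -rcosetM => e.
have : y * k \in L :* y by rewrite -e rcoset_refl.
by rewrite mem_rcoset mem_conjg conjgE invgK mulgA.
Qed.

Lemma orbitsS_pick_sections L H K OS : OS \in orbitsS K (sections L H K) ->
  pick_in OS set0 \in sections L H K.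
Proof.
case/imsetP=> S0 S0sec ->; have [k kK ->] := orbitS_mem (pick_orbitS K S0).
exact: sections_act.
Qed.

Lemma orbitsC_section_sub L H K OS O : H \subset K ->
  OS \in orbitsS K (sections L H K) -> O \in orbitsC (stabS K (pick_in OS set0)) H K ->
  stabS K (pick_in OS set0) :&: H :^ pick_in (pick_in O (H : {set gT})) 1 \subset
    L :^ pick_in (pick_in [set E in pick_in OS set0 | E \subset pick_in O (H : {set gT})] L) 1.
Proof.
move=> sHK /orbitsS_pick_sections secS /(orbitsC_pick (stabS_sub _ _) sHK)[xK eC].
by have := stabS_section_sub secS xK; rewrite -eC.
Qed.

End Cosets.

(** * Norms of zero *)

Section NormZero.
Variables (gT : finGroupType) (T : tambara gT).
Implicit Types (H K L KS : {group gT}).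
Local Notation res := (tres T).
Local Notation tr := (ttr T).
Local Notation nm := (tnm T).
Local Notation cj := (tcj T).

Lemma nm_cj_in H K H' x a : H \subset K -> x \in K -> (H' :=: H :^ x)%g ->
  nm H' K (cj x H H' a) = nm H K a.
Proof. by move=> sHK xK eH'; rewrite -(cj_nm a sHK eH' (esym (conjGid xK))) cj_in. Qed.

Lemma nfactor_full H K O (a : tT T H) : H \subset K -> O \in orbitsC K H K ->
  nfactor K O a = nm H K a.
Proof.
move=> sHK /(orbitsC_pick (subxx _) sHK) [xK _]; rewrite /nfactor.
set x := pick_in _ 1%g in xK *.
have eKHx : (K :&: H :^ x)%G = (H :^ x)%G by apply/val_inj; rewrite /= setI_conjG.
by rewrite eKHx res_id nm_cj_in.
Qed.

Section Step.
Variables H K : {group gT}.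
Hypothesis sHK : H \subset K.
Hypothesis IHK : forall KS L, KS \proper K -> L \subset KS -> nm L KS 0 = 0.

Lemma nfactor0_proper KS O : KS \proper K -> O \in orbitsC KS H K ->
  nfactor KS O (0 : tT T H) = 0.
Proof.
move=> ltKS /(orbitsC_pick (proper_sub ltKS) sHK) [xK _]; rewrite /nfactor.
rewrite (ring_hom0 (cj_ring_hom _ _)) // (ring_hom0 (res_ring_hom _ _)) ?subsetIr //.
exact: IHK (subsetIl _ _).
Qed.

(* In the reciprocity formula for [nm (0 + 0)] only the orbits [[set set0]] and
   [[set rcosets H K]] have full stabiliser; each contributes [nm 0], and all other
   terms vanish by induction. *)
Lemma nm0_step : nm H K 0 = 0.
Proof.
set n := nm H K 0.
have nn : n * n = n by rewrite -nmM // mulr0.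
have term OS : (let S := pick_in OS set0 in
    tr (stabS K S) K (\prod_(O in orbitsC (stabS K S) H K)
      nfactor (stabS K S) O (if pick_in O (H : {set gT}) \in S then 0 else 0 : tT T H)))
    = if K \subset stabS K (pick_in OS set0) then n else 0.
  have nonempty KS : (0 < #|orbitsC KS H K|)%N.
    by rewrite card_gt0; apply/set0Pn; exists (orbit 'Rs KS (H : {set gT})); apply: orbitsC_H.
  rewrite /=; case: ifP => [sKS | nsKS].
    have -> : stabS K (pick_in OS set0) = K.
      by apply/val_inj/eqP; rewrite eqEsubset sKS stabS_sub.
    rewrite tr_id (eq_bigr (fun _ => n)) => [|O OX]; last by rewrite if_same nfactor_full.
    exact: prodr_const_idem.
  rewrite (eq_bigr (fun _ => 0)) => [|O OX]; last first.
    by rewrite if_same nfactor0_proper // properEneq stabS_sub andbT; apply: contraFneq nsKS => ->.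
  by rewrite prodr_const_idem ?mulr0 // tr0 // stabS_sub.
have := nm_sum (0 : tT T H) 0 sHK; rewrite addr0 -/n (eq_bigr _ (fun OS _ => term OS)).
rewrite (bigD1 [set set0]) ?orbitsS_set0 // pick_in1 stabS_set0 subxx.
rewrite (bigD1 [set rcosets H K]); last first.
  by rewrite orbitsS_rcosets eq_sym set0_neq_rcosets.
rewrite pick_in1 stabS_rcosets subxx big1 => [|OS /andP[/andP[OSX nOS0] nOSX]].
  by move=> /= /eqP; rewrite addr0 eq_sym -subr_eq0 addrK => /eqP.
case: ifP => // sK; case: (orbitsS_fixed OSX sK) => eOS.
  by rewrite eOS eqxx in nOS0.
by rewrite eOS eqxx in nOSX.
Qed.

End Step.

Lemma nm0 H K : H \subset K -> nm H K 0 = 0.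
Proof.
elim: {K}_.+1 {-2}K (ltnSn #|K|) H => // m IHm K leKm H sHK.
apply: nm0_step sHK _ => KS L ltKS sLKS.
by apply: IHm sLKS; apply: leq_trans (proper_card ltKS) _.
Qed.

End NormZero.

(** * Transfer spans *)

Section Closure.
Variables (gT : finGroupType) (T : tdata gT).

Definition res_closed (M : tfam T) :=
  forall H K : {group gT}, forall x, H \subset K -> M K x -> M H (tres T H K x).
Definition cj_closed (M : tfam T) :=
  forall g (H K : {group gT}) x, (K :=: H :^ g)%g -> M H x -> M K (tcj T g H K x).
Definition nm_closed (M : tfam T) :=
  forall H K : {group gT}, forall x, H \subset K -> M H x -> M K (tnm T H K x).

Inductive trspan (M : tfam T) (K : {group gT}) : tT T K -> Prop :=
  | trspan0 : trspan M 0
  | trspanD a b : trspan M a -> trspan M b -> trspan M (a + b)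
  | trspan_term (H : {group gT}) r m :
      H \subset K -> M H m -> trspan M (ttr T H K (r * m)).

End Closure.

Section TransferSpan.
Variables (gT : finGroupType) (T : tambara gT).
Implicit Types (H K L KS : {group gT}) (M : tfam T).
Local Notation res := (tres T).
Local Notation tr := (ttr T).
Local Notation nm := (tnm T).
Local Notation cj := (tcj T).

Lemma trspan_sum M K I (r : seq I) (P : pred I) (F : I -> tT T K) :
  (forall i, P i -> trspan M (F i)) -> trspan M (\sum_(i <- r | P i) F i).
Proof. by move=> spanF; apply: big_ind => //; [apply: trspan0 | apply: trspanD]. Qed.

Lemma trspan_mem M K m : M K m -> trspan M m.
Proof. by move=> Mm; rewrite -[m]mul1r -[_ * m]tr_id; apply: trspan_term. Qed.

Lemma trspanMl M K r (z : tT T K) : trspan M z -> trspan M (r * z).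
Proof.
elim=> [|a b _ IHa _ IHb|H r' m sHK Mm]; first by rewrite mulr0; apply: trspan0.
  by rewrite mulrDr; apply: trspanD.
by rewrite mulrC frobenius // mulrAC; apply: trspan_term.
Qed.

Lemma trspanMr M K r (z : tT T K) : trspan M z -> trspan M (z * r).
Proof. by rewrite mulrC; apply: trspanMl. Qed.

Lemma trspan_prod M K (I : finType) (A : {pred I}) (F : I -> tT T K) i :
  i \in A -> trspan M (F i) -> trspan M (\prod_(j in A) F j).
Proof. by move=> Ai spanFi; rewrite (bigD1 i) //; apply: trspanMr. Qed.

Lemma trspan_tr M K K' (z : tT T K) : K \subset K' -> trspan M z -> trspan M (tr K K' z).
Proof.
move=> sKK'; elim=> [|a b _ IHa _ IHb|H r m sHK Mm].
- by rewrite tr0 //; apply: trspan0.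
- by rewrite trD //; apply: trspanD.
by rewrite tr_trans //; apply: trspan_term (subset_trans sHK sKK') Mm.
Qed.

Lemma trspan_cj M g K K' (z : tT T K) : cj_closed M -> (K' :=: K :^ g)%g ->
  trspan M z -> trspan M (cj g K K' z).
Proof.
move=> cjM eK'; elim=> [|a b _ IHa _ IHb|H r m sHK Mm].
- by rewrite (ring_hom0 (cj_ring_hom T eK')); apply: trspan0.
- by rewrite (ring_homD (cj_ring_hom T eK')); apply: trspanD.
rewrite (cj_tr _ sHK (erefl _) eK') (ring_homM (cj_ring_hom T (erefl _))).
by apply: trspan_term; [rewrite eK' conjSg | apply: cjM].
Qed.

Lemma trspan_res M H K (z : tT T K) : res_closed M -> cj_closed M -> H \subset K ->
  trspan M z -> trspan M (res H K z).
Proof.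
move=> resM cjM sHK; elim=> [|a b _ IHa _ IHb|L r m sLK Mm].
- by rewrite (ring_hom0 (res_ring_hom T sHK)); apply: trspan0.
- by rewrite (ring_homD (res_ring_hom T sHK)); apply: trspanD.
rewrite mackey_tr //; apply: trspan_sum => C _.
rewrite (ring_homM (cj_ring_hom T (erefl _))) (ring_homM (res_ring_hom T (subsetIr _ _))).
apply: trspan_term; first exact: subsetIl.
by apply: resM (subsetIr _ _) _; apply: cjM.
Qed.

Section Norm.
Variable M : tfam T.
Hypotheses (Mres : res_closed M) (Mcj : cj_closed M) (Mnm : nm_closed M).

(* Each term of a reciprocity formula has, at the orbit of the coset [K], a factor
   lying in the span, which absorbs the other factors. *)
Lemma trspan_nm_tr H K K' r (m : tT T H) : H \subset K -> K \subset K' -> M m ->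
  trspan M (nm K K' (tr H K (r * m))).
Proof.
move=> sHK sKK' Mm; rewrite nm_tr //; apply: trspan_sum => OS secOS /=.
apply: trspan_tr (stabS_sub _ _) _; apply: trspan_prod (orbitsC_H _ K K') _.
have sub := orbitsC_section_sub sKK' secOS (orbitsC_H _ _ _).
rewrite (ring_homM (cj_ring_hom T (erefl _))) (ring_homM (res_ring_hom T sub)).
rewrite nmM ?subsetIl //; apply/trspanMl/trspan_mem.
by apply: Mnm (subsetIl _ _) _; apply: Mres sub _; apply: Mcj.
Qed.

Section Step.
Variables K K' : {group gT}.
Hypothesis sKK' : K \subset K'.
Hypothesis IHK : forall KS L (v : tT T L), KS \proper K' -> L \subset KS ->
  trspan M v -> trspan M (nm L KS v).

Lemma nfactor_trspan KS O (w : tT T K) : KS \subset K' -> O \in orbitsC KS K K' ->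
  trspan M w -> trspan M (nm K K' w) -> trspan M (nfactor KS O w).
Proof.
move=> sKS OX spw spnw; have [eKS|neKS] := eqVneq KS K'.
  by subst KS; rewrite nfactor_full.
have [xK _] := orbitsC_pick sKS sKK' OX; rewrite /nfactor.
apply: IHK (subsetIl _ _) _.
  by rewrite properEneq sKS andbT; apply: contra_neq neKS => /val_inj.
by apply: trspan_res (subsetIr _ _) _ => //; apply: trspan_cj.
Qed.

Lemma trspan_nmD (a b : tT T K) : trspan M a -> trspan M b ->
  trspan M (nm K K' a) -> trspan M (nm K K' b) -> trspan M (nm K K' (a + b)).
Proof.
move=> spa spb spna spnb; rewrite nm_sum //; apply: trspan_sum => OS _ /=.
apply: trspan_tr (stabS_sub _ _) _; apply: trspan_prod (orbitsC_H _ K K') _.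
by case: ifP => _; apply: nfactor_trspan; rewrite ?stabS_sub ?orbitsC_H.
Qed.

End Step.

Lemma trspan_nm K K' (z : tT T K) : K \subset K' -> trspan M z -> trspan M (nm K K' z).
Proof.
elim: {K'}_.+1 {-2}K' (ltnSn #|K'|) K z => // N IHN K' leK'N K z sKK'.
have IHK KS L (v : tT T L) : KS \proper K' -> L \subset KS ->
    trspan M v -> trspan M (nm L KS v).
  by move=> ltKS; apply: IHN; apply: leq_trans (proper_card ltKS) _.
elim=> [|a b spa IHa spb IHb|H r m sHK Mm].
- by rewrite nm0 //; apply: trspan0.
- exact: trspan_nmD.
- exact: trspan_nm_tr.
Qed.

Lemma trspan_tideal : is_tideal (trspan M).
Proof.
split=> [H|H|H r x|H K x sHK|]; [exact: trspan0 | exact: trspanD | exact: trspanMl |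
                                 exact: trspan_res |].
split=> [H K x sHK|H K x sHK|g H K x eK]; [exact: trspan_tr | exact: trspan_nm |
                                           exact: trspan_cj].
Qed.

Lemma tgen_trspan : feq (tgen M) (trspan M).
Proof.
move=> H x; split; first by apply: (tgen_min trspan_tideal) => K y; apply: trspan_mem.
have hI := tgen_tideal M.
elim=> [|a b _ IHa _ IHb|L r m sLH Mm]; [exact: (tideal0 hI H) | exact: tidealD hI IHa IHb |].
by apply: (tideal_tr hI sLH); apply: (tidealMl hI); apply: tgen_sub.
Qed.

End Norm.

Section Products.
Variables M1 M2 M3 : tfam T.
Hypotheses (M1res : res_closed M1) (M2res : res_closed M2) (M2cj : cj_closed M2).
Hypothesis M12 : forall H (a b : tT T H), M1 a -> M2 b -> M3 (a * b).

Lemma trspan_mull K (a w : tT T K) : M1 a -> trspan M2 w -> trspan M3 (a * w).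
Proof.
move=> M1a; elim=> [|b c _ IHb _ IHc|H r m sHK M2m]; first by rewrite mulr0; apply: trspan0.
  by rewrite mulrDr; apply: trspanD.
rewrite mulrC frobenius // -mulrA; apply: trspan_term => //.
by rewrite mulrC; apply: M12 => //; apply: M1res.
Qed.

Lemma trspan_mul K (z w : tT T K) : trspan M1 z -> trspan M2 w -> trspan M3 (z * w).
Proof.
elim=> [|a b _ IHa _ IHb|H r m sHK M1m] spw; first by rewrite mul0r; apply: trspan0.
  by rewrite mulrDl; apply: trspanD; [apply: IHa | apply: IHb].
rewrite frobenius // -mulrA; apply/(trspan_tr sHK)/trspanMl/trspan_mull => //.
exact: trspan_res.
Qed.

End Products.

End TransferSpan.

(** * Atoms *)

Section Atoms.
Variables (gT : finGroupType) (T : tambara gT).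
Implicit Types (H K B : {group gT}) (g x : gT).
Local Notation res := (tres T).
Local Notation nm := (tnm T).
Local Notation cj := (tcj T).
Variables (L0 : {group gT}) (I : finType) (seed : I -> tT T L0).

Definition atom_index := (I * {group gT} * gT)%type.

Definition atom (t : atom_index) K : tT T K :=
  let: (i, B, g) := t in nm B K (res B (L0 :^ g)%G (cj g L0 (L0 :^ g)%G (seed i))).

Definition atom_at K (t : atom_index) : bool :=
  let: (_, B, g) := t in (B \subset K) && (B \subset L0 :^ g)%g.

Definition atom_prod (j : nat) : tfam T := fun K z =>
  exists s, [/\ (j <= size s)%N, all (atom_at K) s & z = \prod_(t <- s) atom t K].

Lemma atom_prodM i j K (a b : tT T K) :
  atom_prod i a -> atom_prod j b -> atom_prod (i + j) (a * b).
Proof.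
move=> [s [ls As ->]] [s' [ls' As' ->]]; exists (s ++ s').
by rewrite size_cat leq_add // all_cat As As' big_cat.
Qed.

Lemma atom_prod_leq i j K (a : tT T K) : (j <= i)%N -> atom_prod i a -> atom_prod j a.
Proof. by move=> leji [s [lis As ->]]; exists s; rewrite (leq_trans leji). Qed.

Lemma atom_prod_atom K t : atom_at K t -> atom_prod 1 (atom t K).
Proof. by move=> At; exists [:: t]; rewrite /= At big_seq1. Qed.

Lemma atom_prod_map K K' (h : tT T K -> tT T K') :
  {morph h : a b / a * b} -> h 1 = 1 ->
  (forall t, atom_at K t -> atom_prod 1 (h (atom t K))) ->
  forall j (z : tT T K), atom_prod j z -> atom_prod j (h z).
Proof.
move=> hM h1 hA j _ [s [ljs As ->]]; apply: atom_prod_leq ljs _.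
rewrite (big_morph h hM h1).
elim: s As => [_|t s IHs /andP[At As]]; first by exists [::]; rewrite !big_nil.
by rewrite big_cons /= -add1n; apply: atom_prodM; [apply: hA | apply: IHs].
Qed.

Lemma cj_res_cj g x B (a : tT T L0) : (B \subset L0 :^ g)%g ->
  cj x B (B :^ x)%G (res B (L0 :^ g)%G (cj g L0 (L0 :^ g)%G a)) =
  res (B :^ x)%G (L0 :^ (g * x))%G (cj (g * x) L0 (L0 :^ (g * x))%G a).
Proof.
move=> sBL; rewrite (cj_res (K' := (L0 :^ (g * x))%G) _ sBL (erefl _)) /= ?conjsgM //.
by rewrite cj_comp //= conjsgM.
Qed.

Lemma atom_res H K t : H \subset K -> atom_at K t -> atom_prod 1 (res H K (atom t K)).
Proof.
case: t => [[i B] g] sHK /andP[sBK sBL]; rewrite /= mackey_nm //.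
set A := dcosets B H K; have A_gt0 : (0 < #|A|)%N.
  by apply/card_gt0P; exists [set (b * 1 * h)%g | b in B, h in H]; apply: imset_f.
apply: atom_prod_leq A_gt0 _.
exists [seq (i, (H :&: B :^ pick_in C 1%g)%G, (g * pick_in C 1%g)%g) | C <- enum A].
rewrite size_map -cardE leqnn big_map big_enum /=; split => //.
  apply/allP => _ /mapP[C _ ->] /=; rewrite subsetIl /=.
  by apply: subset_trans (subsetIr _ _) _; rewrite conjsgM conjSg.
apply: eq_bigr => C _; rewrite cj_res_cj // res_trans ?subsetIr //.
by rewrite /= conjsgM conjSg.
Qed.

Lemma atom_cj g K K' t : (K' :=: K :^ g)%g -> atom_at K t ->
  atom_prod 1 (cj g K K' (atom t K)).
Proof.
case: t => [[i B] g'] eK' /andP[sBK sBL].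
rewrite /= (cj_nm (H' := (B :^ g)%G) _ sBK (erefl _) eK') cj_res_cj //.
apply: (atom_prod_atom (t := (i, (B :^ g)%G, (g' * g)%g))).
by rewrite /= eK' !conjSg sBK conjsgM conjSg.
Qed.

Lemma atom_nm K K' t : K \subset K' -> atom_at K t -> atom_prod 1 (nm K K' (atom t K)).
Proof.
case: t => [[i B] g] sKK' /andP[sBK sBL]; rewrite /= nm_trans //.
by apply: (atom_prod_atom (t := (i, B, g))); rewrite /= sBL (subset_trans sBK sKK').
Qed.

Lemma atom_prod_res j : res_closed (atom_prod j).
Proof.
move=> H K z sHK; apply: atom_prod_map => [||t]; first exact: ring_homM (res_ring_hom T sHK).
  exact: ring_hom1 (res_ring_hom T sHK).
exact: atom_res.
Qed.

Lemma atom_prod_cj j : cj_closed (atom_prod j).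
Proof.
move=> g H K z eK; apply: atom_prod_map => [||t]; first exact: ring_homM (cj_ring_hom T eK).
  exact: ring_hom1 (cj_ring_hom T eK).
exact: atom_cj.
Qed.

Lemma atom_prod_nm j : nm_closed (atom_prod j).
Proof.
move=> H K z sHK; apply: atom_prod_map => [||t]; [exact: nmM | exact: nm1 | exact: atom_nm].
Qed.

Lemma atom_prod_seed i : atom_prod 1 (seed i).
Proof.
have eL0 : (L0 :^ 1%g)%G = L0 by apply/val_inj; rewrite /= conjsg1.
have -> : seed i = atom (i, L0, 1%g) L0 by rewrite /= eL0 res_id nm_id cj_in.
by apply: atom_prod_atom; rewrite /= conjsg1 subxx.
Qed.

Lemma tideal_atom J K i B g : is_tideal J -> J L0 (seed i) -> atom_at K (i, B, g) ->
  J K (atom (i, B, g) K).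
Proof.
move=> hJ Jseed /andP[sBK sBL].
by apply: (tideal_nm hJ sBK); apply: (tideal_res hJ sBL); apply: (tideal_cj hJ (erefl _)).
Qed.

Lemma tpow_atoms J n K s : is_tideal J -> (n < size s)%N -> all (atom_at K) s ->
  (forall t, t \in s -> J L0 (seed t.1.1)) -> tpow J n (\prod_(t <- s) atom t K).
Proof.
move=> hJ lns As Jseed; rewrite -(big_map (atom^~ K) predT id).
apply: (tpow_prod hJ); last by rewrite size_map.
move=> _ /mapP[[[i B] g] st ->]; apply: (tideal_atom hJ (Jseed _ st)).
exact: (allP As).
Qed.

Lemma atom_prod_tpow J n K (z : tT T K) : is_tideal J -> (forall i, J L0 (seed i)) ->
  atom_prod n.+1 z -> tpow J n z.
Proof. by move=> hJ Jseed [s [lns As ->]]; apply: tpow_atoms. Qed.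

Lemma trspan_atom_prod_tideal j : is_tideal (trspan (atom_prod j)).
Proof.
by apply: trspan_tideal; [exact: atom_prod_res | exact: atom_prod_cj | exact: atom_prod_nm].
Qed.

Lemma tpow_trspan_atom_prod P n : fsub P (trspan (atom_prod 1)) ->
  fsub (tpow P n) (trspan (atom_prod n.+1)).
Proof.
move=> sP; elim: n => [//|n IHn] /=.
apply: tgen_min; first exact: trspan_atom_prod_tideal.
move=> H _ [x [y [Px Py ->]]]; rewrite -addn1.
apply: trspan_mul (IHn _ _ Px) (sP _ _ Py);
  [exact: atom_prod_res | exact: atom_prod_res | exact: atom_prod_cj |].
by move=> K a b; apply: atom_prodM.
Qed.

End Atoms.

Section AtomSplitting.
Variables (gT : finGroupType) (T : tambara gT) (L0 : {group gT}).

Lemma atom_prod_splitD (I : finType) (seed : I -> tT T L0) i j K (q : tT T K) :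
  atom_prod seed (i + j) q ->
  exists u v, [/\ atom_prod seed i u, atom_prod seed j v & q = u * v].
Proof.
move=> [s [ls As ->]]; exists (\prod_(t <- take i s) atom seed t K).
exists (\prod_(t <- drop i s) atom seed t K); rewrite -big_cat cat_take_drop.
split=> //; [exists (take i s) | exists (drop i s)]; split=> //.
- by rewrite size_takel //; lia.
- by apply/allP => t /mem_take/(allP As).
- by rewrite size_drop; lia.
- by apply/allP => t /mem_drop/(allP As).
Qed.

Lemma atom_prod_split_bool (seed : bool -> tT T L0) a b K (q : tT T K) :
  atom_prod seed (a + b).+2 q ->
  tpow (tgen1 (seed true)) a q \/ tpow (tgen1 (seed false)) b q.
Proof.
move=> [s [ls As ->]].
pose P (t : atom_index gT bool) := t.1.1.
have tpow_filter (Q : pred (atom_index gT bool)) c n :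
    (forall t, Q t -> t.1.1 = c) -> (n < count Q s)%N ->
    tpow (tgen1 (seed c)) n (\prod_(t <- s | Q t) atom seed t K).
  move=> Qc ltn; rewrite -big_filter; apply: (tpow_atoms (tgen_tideal _)).
  - by rewrite size_filter.
  - by rewrite all_filter; apply/allP => t ts; apply/implyP => _; apply: (allP As).
  - by move=> t; rewrite mem_filter => /andP[/Qc -> _]; apply: tgen1_mem.
rewrite (bigID P); have := count_predC P s.
case: (leqP a.+1 (count P s)) => [la _ | la ls'].
  by left; apply: (tidealMr (tpow_tideal _ (tgen_tideal _))); apply: tpow_filter.
right; apply: (tidealMl (tpow_tideal _ (tgen_tideal _))); apply: tpow_filter.
  by move=> [[[] B] g].
rewrite -(ltn_add2l (count P s)) [X in (_ < X)%N]ls'; apply: leq_trans ls.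
by rewrite ltnS -addSn leq_add2r ltnW.
Qed.

Lemma atom_expr (I : finType) (seed : I -> tT T L0) K t k : atom_at L0 K t ->
  atom seed t K ^+ k = atom (fun i => seed i ^+ k) t K.
Proof.
case: t => [[i B] g] /andP[sBK sBL].
by rewrite /= -nmX // -(ring_homX (res_ring_hom T sBL)) -(ring_homX (cj_ring_hom T (erefl _))).
Qed.

(* Some atom occurs more than [k * m.+1] times, and the [k]-th power of an atom of [x]
   is an atom of [x ^+ k]. *)
Lemma atom_prod_pigeonhole (x : tT T L0) k m K (q : tT T K) :
  atom_prod (fun _ : unit => x) (#|{: atom_index gT unit}| * (k * m.+1)).+1 q ->
  tpow (tgen1 (x ^+ k)) m q.
Proof.
move=> [s [ls As ->]]; have [t0 lt0] := count_mem_pigeonhole ls.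
have At0 : atom_at L0 K t0.
  by apply: (allP As); rewrite -has_pred1 has_count (leq_ltn_trans _ lt0).
have hJ := tpow_tideal m (tgen_tideal (fun K0 (y : tT T K0) =>
  exists e : L0 = K0, y = ecast Z (tT T Z) e (x ^+ k))).
rewrite (prod_count_mem _ _ t0); apply: (tidealMr hJ).
rewrite -(subnKC (ltnW lt0)) exprD; apply: (tidealMr hJ).
rewrite exprM atom_expr //; apply: tpow_expr.
by case: t0 At0 {lt0} => [[[] B] g] At0; apply: tideal_atom At0; [exact: tgen_tideal | exact: tgen1_mem].
Qed.

End AtomSplitting.

(** * Radicals *)

Section Radical.
Variables (gT : finGroupType) (T : tambara gT).
Implicit Types (H K L : {group gT}) (X J : tfam T).

Definition tadditive X : Prop :=
  (forall H, X H 0) /\ (forall H a b, X H a -> X H b -> X H (a + b)).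

Lemma tideal_additive J : is_tideal J -> tadditive J.
Proof. by move=> hJ; split=> [H|H a b]; [apply: tideal0 | apply: tidealD]. Qed.

(* The elements of [tpow (tgen1 z) n] are sums of transfers of products of [n.+1]
   atoms. *)
Lemma tpow_tgen1_sub L (I : finType) (seed : I -> tT T L) H (z : tT T H) n X :
  tadditive X -> trspan (atom_prod seed 1) z ->
  (forall K K' r (q : tT T K'), K' \subset K -> atom_prod seed n.+1 q ->
     X K (ttr T K' K (r * q))) ->
  fsub (tpow (tgen1 z) n) X.
Proof.
move=> [X0 XD] spz Xterm K w.
move/(tpow_trspan_atom_prod (tgen1_min (trspan_atom_prod_tideal _ _) spz)).
by elim=> [|a b _ Xa _ Xb|K' r q sK'K Aq]; [apply: X0 | apply: XD | apply: Xterm].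
Qed.

Lemma tpow_tgen1_sub_tideal L (I : finType) (seed : I -> tT T L) H (z : tT T H) n J :
  is_tideal J -> trspan (atom_prod seed 1) z ->
  (forall K (q : tT T K), atom_prod seed n.+1 q -> J K q) ->
  fsub (tpow (tgen1 z) n) J.
Proof.
move=> hJ spz AJ; apply: (tpow_tgen1_sub (tideal_additive hJ) spz).
by move=> K K' r q sK'K /AJ Jq; apply: tideal_trM hJ sK'K Jq r.
Qed.

Lemma zero_tideal : is_tideal (fun H (x : tT T H) => x = 0).
Proof.
split=> [//|H x y /= -> ->|H r x /= ->|H K x sHK /= ->|]; rewrite ?addr0 ?mulr0 //.
  exact: ring_hom0 (res_ring_hom T sHK).
split=> [H K x sHK /= ->|H K x sHK /= ->|g H K x eK /= ->]; [exact: tr0 | exact: nm0 |].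
exact: ring_hom0 (cj_ring_hom T eK).
Qed.

Section Additive.
Variable X : tfam T.
Hypothesis hX : tadditive X.

Lemma trad_add H (x y : tT T H) : trad X x -> trad X y -> trad X (x + y).
Proof.
move=> [a sXa] [b sXb]; exists (a + b).+1.
pose seed (c : bool) := if c then x else y.
apply: (tpow_tgen1_sub (seed := seed)) => // [|K K' r q sK'K].
  by apply: trspanD; apply: trspan_mem; [exact: (atom_prod_seed seed true) | exact: (atom_prod_seed seed false)].
by case/atom_prod_split_bool => Jq; [apply: sXa | apply: sXb];
  apply: (tideal_trM (tpow_tideal _ (tgen_tideal _))).
Qed.

Lemma trad_tideal : is_tideal (trad X).
Proof.
have gen H (x : tT T H) : is_tideal (tgen1 x) := tgen_tideal _.
split=> [H|H x y|H r x|H K x sHK|].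
- exists 0%N; apply: fsub_trans (tgen1_min zero_tideal (erefl (0 : tT T H))) _.
  by move=> K _ ->; case: hX.
- exact: trad_add.
- by apply: trad_tgen1; apply: tidealMl (gen _ x) (tgen1_mem x) r.
- by apply: trad_tgen1; apply: tideal_res (gen _ x) sHK (tgen1_mem x).
split=> [H K x sHK|H K x sHK|g H K x eK]; apply: trad_tgen1.
- exact: tideal_tr (gen _ x) sHK (tgen1_mem x).
- exact: tideal_nm (gen _ x) sHK (tgen1_mem x).
- exact: tideal_cj (gen _ x) eK (tgen1_mem x).
Qed.

End Additive.

Lemma trad_idem X : fsub (trad (trad X)) (trad X).
Proof.
move=> H x [n sXn]; have [m sXm] := sXn _ _ (tpow_expr n (tgen1_mem x)).
exists (#|{: atom_index gT unit}| * (n.+1 * m.+1))%N.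
apply: fsub_trans sXm; apply: (tpow_tgen1_sub_tideal (seed := fun _ : unit => x)).
- exact: tpow_tideal (tgen_tideal _).
- exact: trspan_mem (atom_prod_seed _ tt).
- by move=> K q /atom_prod_pigeonhole.
Qed.

End Radical.

Section Sums.
Variables (gT : finGroupType) (T : tambara gT) (Lam : Type) (F : Lam -> tfam T).

Lemma tsum_mem l H (x : tT T H) : F l x -> tsum F x.
Proof. by move=> Fx; exists [:: (l, x)]; split=> [p [<- | []] | ]; rewrite ?big_seq1. Qed.

Lemma tsum_additive : tadditive (tsum F).
Proof.
split=> [H|H x y [s [Fs ->]] [s' [Fs' ->]]]; first by exists [::]; rewrite big_nil.
exists (s ++ s'); rewrite big_cat; split=> // p sp.
by case: (List.in_app_or _ _ _ sp); [apply: Fs | apply: Fs'].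
Qed.

Lemma tsum_sub_tideal J : is_tideal J -> (forall l, fsub (F l) J) -> fsub (tsum F) J.
Proof.
move=> hJ sFJ H x [s [Fs ->]]; elim: s Fs => [_|p s IHs Fs]; first by rewrite big_nil; apply: tideal0.
rewrite big_cons; apply: (tidealD hJ); first by apply: (sFJ p.1); apply: Fs; left.
by apply: IHs => q sq; apply: Fs; right.
Qed.

End Sums.

(** * Pushforward along a morphism *)

Section Morphism.
Variables (gT : finGroupType) (T S : tambara gT).
Variable f : forall H : {group gT}, tT T H -> tT S H.
Hypothesis hf : is_tmorph f.
Implicit Types (H K L : {group gT}) (I J : tfam T).

Lemma tmorph_ring_hom H : ring_hom (@f H). Proof. by case: hf. Qed.
Lemma tmorph_res H K x : H \subset K -> f (tres T H K x) = tres S H K (f x).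
Proof. by case: hf => _ h *; apply: h. Qed.
Lemma tmorph_nm H K x : H \subset K -> f (tnm T H K x) = tnm S H K (f x).
Proof. by case: hf => _ _ _ h *; apply: h. Qed.
Lemma tmorph_cj g H K x : (K :=: H :^ g)%g -> f (tcj T g H K x) = tcj S g H K (f x).
Proof. by case: hf => _ _ _ _ h *; apply: h. Qed.

Definition timg I : tfam S := fun H y => exists x, I H x /\ y = f x.

Lemma timg_mono I J : fsub I J -> fsub (timg I) (timg J).
Proof. by move=> sIJ H _ [x [Ix ->]]; exists x; split=> //; apply: sIJ. Qed.

Lemma tpush_mono I J : fsub I J -> fsub (tpush f I) (tpush f J).
Proof. by move/timg_mono/tgen_mono. Qed.

Lemma tphi_mono I J : fsub I J -> fsub (tphi f I) (tphi f J).
Proof. by move/tpush_mono/trad_mono. Qed.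

Section Image.
Variable I : tfam T.
Hypothesis hI : is_tideal I.

Lemma timg_res : res_closed (timg I).
Proof.
move=> H K _ sHK [x [Ix ->]]; exists (tres T H K x).
by rewrite tmorph_res //; split=> //; apply: (tideal_res hI).
Qed.

Lemma timg_cj : cj_closed (timg I).
Proof.
move=> g H K _ eK [x [Ix ->]]; exists (tcj T g H K x).
by rewrite tmorph_cj //; split=> //; apply: (tideal_cj hI).
Qed.

Lemma timg_nm : nm_closed (timg I).
Proof.
move=> H K _ sHK [x [Ix ->]]; exists (tnm T H K x).
by rewrite tmorph_nm //; split=> //; apply: (tideal_nm hI).
Qed.

Lemma tpush_trspan : feq (tpush f I) (trspan (timg I)).
Proof. exact: tgen_trspan timg_res timg_cj timg_nm. Qed.

End Image.

Lemma tpush_mul I J H (u v : tT S H) : is_tideal I -> is_tideal J ->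
  tpush f I u -> tpush f J v -> tpush f (tmeet I J) (u * v).
Proof.
move=> hI hJ /(tpush_trspan hI) spu /(tpush_trspan hJ) spv.
apply/(tpush_trspan (tmeet_tideal hI hJ)).
apply: trspan_mul spu spv; [exact: timg_res | exact: timg_res | exact: timg_cj |].
move=> K _ _ [x [Ix ->]] [x' [Jx' ->]]; exists (x * x').
by rewrite (ring_homM (tmorph_ring_hom K)); split=> //; split; [apply: tidealMr | apply: tidealMl].
Qed.

Lemma tmorph_atom_prod L (A : finType) (seed : A -> tT T L) j K (q : tT S K) :
  atom_prod (fun a => f (seed a)) j q -> exists2 q', atom_prod seed j q' & q = f q'.
Proof.
move=> [s [ljs As ->]]; exists (\prod_(t <- s) atom seed t K); first by exists s.
rewrite (ring_hom_prod (tmorph_ring_hom K)); apply: eq_big_seq => -[[i B] g] ts.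
have /andP[sBK sBL] := allP As _ ts.
by rewrite /= tmorph_nm // tmorph_res // tmorph_cj.
Qed.

Lemma tphi_tideal I : is_tideal (tphi f I).
Proof. exact/trad_tideal/tideal_additive/tgen_tideal. Qed.

Lemma tphi_mem I H (x : tT T H) : I H x -> tphi f I (f x).
Proof. by move=> Ix; exists 0%N; apply: tgen1_min (tgen_tideal _) _; apply: tgen_sub; exists x. Qed.

Lemma tphi_radical I : is_radical_tideal (tphi f I).
Proof.
split=> [|H x]; first exact: tphi_tideal.
split=> [phix | /trad_idem //].
exact (tideal_sub_trad (tphi_tideal I) (fsub_refl _) phix).
Qed.

Lemma tphi_tmeet I J : is_tideal I -> is_tideal J ->
  feq (tphi f (tmeet I J)) (tmeet (tphi f I) (tphi f J)).
Proof.
move=> hI hJ H y; split.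
  by move=> phiy; split; apply: tphi_mono phiy => K x [].
case=> [[a sIa] [b sJb]]; exists (a + b).+1.
apply: (tpow_tgen1_sub_tideal (seed := fun _ : unit => y)) => [||K q].
- exact: tgen_tideal.
- exact: trspan_mem (atom_prod_seed _ tt).
rewrite -addnS -addSn => /atom_prod_splitD[u [v [Au Av ->]]].
apply: (tpush_mul hI hJ); [apply: sIa | apply: sJb].
  exact: atom_prod_tpow (tgen_tideal _) (fun _ => tgen1_mem y) Au.
exact: atom_prod_tpow (tgen_tideal _) (fun _ => tgen1_mem y) Av.
Qed.

Lemma tphi_ttop : feq (tphi f (ttop T)) (ttop S).
Proof.
move=> H y; split=> // _; rewrite -[y]mulr1 -(ring_hom1 (tmorph_ring_hom H)).
have phi1 : tphi f (ttop T) (f (1 : tT T H)) by apply: tphi_mem.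
exact: tidealMl (tphi_tideal _) phi1 y.
Qed.

Lemma tpush_trad_tsum_sub (Lam : Type) (F : Lam -> tfam T) :
  fsub (tpush f (trad (tsum F))) (trad (tsum (fun l => tphi f (F l)))).
Proof.
have [G0 GD] := tsum_additive (fun l => tphi f (F l)).
apply: tgen_min; first exact/trad_tideal/tsum_additive.
move=> K _ [x [[n sFn] ->]]; exists n.
apply: (tpow_tgen1_sub (seed := fun _ : unit => f x)) => [||K' K'' r q sK''K'].
- exact: tsum_additive.
- exact: trspan_mem (atom_prod_seed _ tt).
case/tmorph_atom_prod => q' Aq' ->.
have [s [Fs ->]] := sFn _ _ (atom_prod_tpow (tgen_tideal _) (fun _ => tgen1_mem x) Aq').
elim: s Fs => [_|p s IHs Fs].
  by rewrite big_nil (ring_hom0 (tmorph_ring_hom _)) mulr0 tr0 //; apply: G0.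
rewrite big_cons (ring_homD (tmorph_ring_hom _)) mulrDr trD //.
apply: GD; last by apply: IHs => p' sp'; apply: Fs; right.
have Fp : F p.1 K'' p.2 by apply: Fs; left.
exact: (tsum_mem (l := p.1)) (tideal_trM (tphi_tideal _) sK''K' (tphi_mem Fp) r).
Qed.

Lemma tphi_tjoin (Lam : Type) (F : Lam -> tfam T) : (forall l, is_tideal (F l)) ->
  feq (tphi f (tjoin F)) (tjoin (fun l => tphi f (F l))).
Proof.
move=> hF H y; split; first by move/(trad_mono (tpush_trad_tsum_sub (F := F)))/trad_idem.
move/(trad_mono (tsum_sub_tideal (tphi_tideal _) _))/trad_idem; apply=> l.
apply: tphi_mono; apply: tideal_sub_trad (hF l) _.
by move=> K u Fu; apply: tsum_mem Fu.
Qed.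

End Morphism.

Theorem proposition6p11 (gT : finGroupType) (T S : tambara gT)
  (f : forall H : {group gT}, tT T H -> tT S H) (hf : is_tmorph f) :
  (* the map is well defined RadId_G(T) -> RadId_G(S) *)
  (forall I : tfam T, is_radical_tideal I -> is_radical_tideal (tphi f I)) /\
  (* arbitrary joins *)
  (forall (Lam : Type) (F : Lam -> tfam T),
     (forall l, is_radical_tideal (F l)) ->
     feq (tphi f (tjoin F)) (tjoin (fun l => tphi f (F l)))) /\
  (* binary meets *)
  (forall I J : tfam T, is_radical_tideal I -> is_radical_tideal J ->
     feq (tphi f (tmeet I J)) (tmeet (tphi f I) (tphi f J))) /\
  (* top element *)
  feq (tphi f (ttop T)) (ttop S).
Proof.
split; first by move=> I _; apply: tphi_radical.
split; first by move=> Lam F radF; apply: (tphi_tjoin hf) => l; case: (radF l).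
split; last exact: tphi_ttop.
by move=> I J [hI _] [hJ _]; apply: tphi_tmeet.
Qed.
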